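(* Let $\mathbb{F}_q$ be the finite field with $q$ elements and characteristic $p$, let $m$ be a positive integer dividing $q-1$, let $H\subseteq\mathbb{F}_q^*$ be the multiplicative subgroup of index $m$, and let $k$ be an integer with $1\le k\le (q-1)/m$. Let $M_H(k,0)$ be the number of $k$-element subsets $S\subseteq H$ with $\sum_{a\in S}a=0$. Then $$\left|M_H(k,0)-\frac1q\binom{(q-1)/m}{k}\right|\le\binom{\sqrt q+k-1+\frac{q}{mp}}{k}.$$
   Context: For a real number $t$ and a nonnegative integer $k$, $\binom{t}{k}=\frac{t(t-1)\cdots(t-k+1)}{k!}$. *)

From HB Require Import structures.
From mathcomp Require Import all_boot all_order all_algebra all_fingroup.
From mathcomp Require Import reals.
Set Implicit Arguments. Unset Strict Implicit. Unset Printing Implicit Defensive.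
Import Order.TTheory GRing.Theory Num.Theory.
Local Open Scope ring_scope.

Definition binomR (R : realType) (t : R) (k : nat) : R :=
  (\prod_(i < k) (t - i%:R)) / (k`!)%:R.

Definition M_H (F : finFieldType) (H : {set {unit F}}) (k : nat) : nat :=
  #|[set S : {set {unit F}} | [&& S \subset H, #|S| == k
       & \sum_(a in S) FinRing.uval a == 0]]|.

From HB Require Import structures.
From mathcomp Require Import all_boot all_order all_algebra all_field all_fingroup.
From mathcomp Require Import reals complex.
From mathcomp Require Import zify ring.
Set Implicit Arguments.
Unset Strict Implicit.
Unset Printing Implicit Defensive.

Import Order.TTheory GRing.Theory Num.Theory.
Local Open Scope ring_scope.

(* Orthogonality of additive characters gives q M_H(k,0) = sum_b e_k(psi(b a) : a in H),
   where e_k is the k-th elementary symmetric function of the |H| roots of unity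
   psi(b a).  The term b = 0 is C(|H|, k).  For b <> 0 the power sums p_j are Gauss
   periods: |p_j| <= sqrt q when p does not divide j (Parseval, since all dilates
   of b by H share the same period), and p_j = |H| <= p (q / (m p)) otherwise.
   Newton's identities then bound |e_k| by the k-th coefficient of
   (1 - z)^-(sqrt q) (1 - z^p)^-(q/(mp)), which is at most that of
   (1 - z)^-(sqrt q + q/(mp)), i.e. binom(sqrt q + q/(mp) + k - 1, k). *)

Section NewtonIdentities.
Variables (R : comNzRingType) (I : finType) (x : I -> R) (A : {set I}).

Definition elem_sym (j : nat) : R :=
  \sum_(S : {set I} | (S \subset A) && (#|S| == j)) \prod_(a in S) x a.

Definition power_sum (i : nat) : R := \sum_(a in A) x a ^+ i.

(* Expanding e_j * p_i splits according to whether the new factor x a ^+ i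
   comes from outside or from inside the j-set S. *)
Let newton_out (j i : nat) : R :=
  \sum_(S : {set I} | (S \subset A) && (#|S| == j))
     \sum_(a in A :\: S) x a ^+ i * \prod_(b in S) x b.

Let newton_in (j i : nat) : R :=
  \sum_(S : {set I} | (S \subset A) && (#|S| == j))
     \sum_(a in S) x a ^+ i * \prod_(b in S) x b.

Let elem_sym_power_sum j i : elem_sym j * power_sum i = newton_out j i + newton_in j i.
Proof.
rewrite /elem_sym /newton_out /newton_in -big_split /= mulr_suml.
apply: eq_bigr => S /andP[SA _].
rewrite mulrC mulr_suml (big_setID S) /= addrC (setIidPr SA).
by congr (_ + _).
Qed.

Let newton_in0 j : newton_in j 0 = j%:R * elem_sym j.
Proof.
rewrite /newton_in /elem_sym mulr_sumr; apply: eq_bigr => S /andP[_ /eqP <-].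
rewrite [LHS](eq_bigr (fun=> \prod_(b in S) x b)) => [|a _]; last by rewrite expr0 mul1r.
by rewrite sumr_const mulr_natl.
Qed.

Let newton_in_set0 i : newton_in 0 i = 0.
Proof.
apply: big1 => S /andP[_ /eqP/cards0_eq ->].
by apply: big_pred0 => a; rewrite inE.
Qed.

Let newton_outS j i : newton_out j i.+1 = newton_in j.+1 i.
Proof.
rewrite /newton_out /newton_in.
under eq_bigr do rewrite big_mkcond.
under [RHS]eq_bigr do rewrite big_mkcond.
rewrite exchange_big [RHS]exchange_big /=; apply: eq_bigr => a _.
rewrite -!big_mkcondr /=.
have [aA|aNA] := boolP (a \in A); last first.
  rewrite !big1 // => S /andP[/andP[SA _]] aS; case/negP: aNA.
    exact: subsetP SA _ aS.
  by move: aS; rewrite inE => /andP[].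
rewrite [RHS](reindex_onto (fun S => a |: S) (fun S => S :\ a)) /=; last first.
  by move=> S /andP[_ aS]; rewrite setD1K.
apply: eq_big => [S|S /andP[_]]; last first.
  by rewrite inE => /andP[aNS _]; rewrite big_setU1 //= exprSr -mulrA.
have [aS|aNS] := boolP (a \in S).
  have /negbTE -> : (a |: S) :\ a != S by apply: contraTneq aS => <-; rewrite !inE eqxx.
  by rewrite !inE aS !andbF.
by rewrite !inE aA aNS /= setU1K // cardsU1 aNS eqSS subUset sub1set aA !eqxx /= !andbT.
Qed.

Lemma newton_identity k :
  k.+1%:R * elem_sym k.+1 =
  \sum_(i < k.+1) (-1) ^+ i * (elem_sym (k - i) * power_sum i.+1).
Proof.
pose a i := newton_out (k - i) i.+1.
have telescope (i : 'I_k.+1) :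
    elem_sym (k - i) * power_sum i.+1 = a i + (if (i < k)%N then a i.+1 else 0).
  case: i => [i /= ik]; rewrite elem_sym_power_sum /a; congr (_ + _).
  case: ltnP => [ik'|ki]; first by rewrite newton_outS subnS prednK // subn_gt0.
  by have -> : (k - i = 0)%N by lia.
under eq_bigr do rewrite telescope mulrDr.
rewrite big_split /= big_ord_recl [X in _ + X]big_ord_recr /= ltnn mulr0 addr0.
rewrite expr0 mul1r {1}/a subn0 newton_outS newton_in0 -addrA.
rewrite [X in _ + X](_ : _ = 0) ?addr0 //.
rewrite -big_split /=; apply: big1 => i _.
by rewrite /bump /= add1n ltn_ord exprS mulN1r mulNr addNr.
Qed.

Lemma elem_sym0 : elem_sym 0 = 1.
Proof.
rewrite /elem_sym (big_pred1 set0) ?big_set0 // => S /=.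
by rewrite cards_eq0; case: eqP => [->|]; rewrite ?sub0set ?andbF.
Qed.

End NewtonIdentities.

Section Multichoose.
Variables (K : numFieldType) (t : K).

Definition multichoose (n : nat) : K := \prod_(i < n) ((t + i%:R) / i.+1%:R).

Lemma multichooseS n : multichoose n.+1 = multichoose n * ((t + n%:R) / n.+1%:R).
Proof. by rewrite /multichoose big_ord_recr. Qed.

Lemma multichoose_ge0 n : 0 <= t -> 0 <= multichoose n.
Proof.
move=> t0; apply: prodr_ge0 => i _.
by rewrite divr_ge0 ?addr_ge0 ?ler0n.
Qed.

Lemma multichoose_homo : 1 <= t -> {homo multichoose : m n / (m <= n)%N >-> m <= n}.
Proof.
move=> t1 m; elim=> [|n IH]; first by rewrite leqn0 => /eqP ->.
rewrite leq_eqVlt => /orP[/eqP -> //|]; rewrite ltnS => /IH mn.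
apply: (le_trans mn); rewrite multichooseS ler_peMr ?multichoose_ge0 ?(le_trans ler01) //.
by rewrite ler_pdivlMr ?ltr0Sn // mul1r -addn1 natrD addrC lerD2r.
Qed.

Lemma multichoose_sum n : t * \sum_(i < n) multichoose i = n%:R * multichoose n.
Proof.
elim: n => [|n IH]; first by rewrite big_ord0 mulr0 mul0r.
rewrite big_ord_recr /= mulrDr IH multichooseS mulrA -mulrDl.
by rewrite [RHS]mulrC mulrA divfK ?pnatr_eq0 // addrC.
Qed.

(* Absorbs the power sums p_j with p | j, each of size up to p a, into the
   a-part of multichoose (B + a) in le_multichoose_newton. *)
Lemma multichoose_sum_dvd (p n : nat) : (0 < p)%N -> 1 <= t ->
  p%:R * \sum_(i < n) (p %| i.+1)%N%:R * multichoose (n.-1 - i)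
    <= \sum_(i < n) multichoose i.
Proof.
move=> p_gt0 t1; elim/ltn_ind: n => n IH.
have [np|pn] := ltnP n p.
  rewrite big1 ?mulr0 => [|i _]; last first.
    suff /negbTE -> : ~~ (p %| i.+1)%N by rewrite mul0r.
    by apply/negP => /(dvdn_leq (ltn0Sn _)); rewrite leqNgt (leq_ltn_trans (ltn_ord i) np).
  by apply: sumr_ge0 => i _; rewrite multichoose_ge0 ?(le_trans ler01).
have [r nE] : exists r, n = (p + r)%N by exists (n - p)%N; rewrite subnKC.
subst n.
rewrite big_split_ord /= mulrDr.
have -> : \sum_(i < p) (p %| i.+1)%N%:R * multichoose ((p + r).-1 - i) = multichoose r.
  case: p p_gt0 {IH pn} => // p' _.
  rewrite big_ord_recr /= dvdnn mul1r big1 ?add0r => [|i _]; first by rewrite addnC addnK.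
  suff /negbTE -> : ~~ (p'.+1 %| i.+1)%N by rewrite mul0r.
  by apply/negP => /(dvdn_leq (ltn0Sn _)); rewrite ltnS leqNgt ltn_ord.
have -> : \sum_(i < r) (p %| (p + i).+1)%N%:R * multichoose ((p + r).-1 - (p + i))
        = \sum_(i < r) (p %| i.+1)%N%:R * multichoose (r.-1 - i).
  apply: eq_bigr => i _; rewrite -addnS dvdn_addr //; congr (_ * multichoose _).
  case: i => i /= ir; lia.
rewrite addnC big_split_ord /= addrC lerD ?IH //; last by lia.
have -> : p%:R * multichoose r = \sum_(i < p) multichoose r.
  by rewrite sumr_const card_ord mulr_natl.
apply: ler_sum => i _.
by rewrite multichoose_homo ?leq_addr.
Qed.

End Multichoose.

Lemma le_multichoose_newton (K : numFieldType) (p : nat) (B a : K)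
    (u c : nat -> K) :
  (0 < p)%N -> 0 <= B -> 0 <= a -> 1 <= B + a ->
  (forall n, 0 <= u n) -> u 0%N <= 1 -> (forall j, 0 <= c j) ->
  (forall j, c j <= B + (p %| j)%N%:R * (p%:R * a)) ->
  (forall n, n.+1%:R * u n.+1 <= \sum_(i < n.+1) u (n - i)%N * c i.+1) ->
  forall n, u n <= multichoose (B + a) n.
Proof.
move=> p_gt0 B0 a0 t1 u0 u01 c0 cB rec.
have mc_ge0 n : 0 <= multichoose (B + a) n by rewrite multichoose_ge0 ?(le_trans ler01).
elim/ltn_ind => -[|n] IH; first by rewrite /multichoose big_ord0.
rewrite -(ler_pM2l (ltr0Sn _ n)); apply: (le_trans (rec n)).
apply: (@le_trans _ _ (\sum_(i < n.+1)
    multichoose (B + a) (n - i)%N * (B + (p %| i.+1)%N%:R * (p%:R * a)))).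
  apply: ler_sum => i _; apply: ler_pM => //; apply: IH.
  by rewrite ltnS leq_subr.
rewrite -multichoose_sum mulrDl.
under eq_bigr do rewrite mulrDr.
rewrite big_split /= lerD //.
  rewrite mulr_sumr (reindex_inj rev_ord_inj) /=; apply: ler_sum => i _.
  by rewrite subSS subKn 1?mulrC // -ltnS.
apply: le_trans _ (ler_wpM2l a0 (multichoose_sum_dvd n.+1 p_gt0 t1)).
rewrite !mulr_sumr; apply: ler_sum => i _.
by rewrite /= le_eqVlt; apply/orP; left; apply/eqP; ring.
Qed.

Lemma exists_nontrivial_root1 (C : numClosedFieldType) (n : nat) :
  (1 < n)%N -> exists2 w : C, w ^+ n = 1 & w != 1.
Proof.
move=> n_gt1; pose P : {poly C} := \poly_(i < n) 1.
have sizeP : size P = n by rewrite size_poly_eq ?oner_eq0.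
have /closed_rootP[w rootPw] : size P != 1 by rewrite sizeP; case: n n_gt1 {P sizeP} => [|[]].
have sum_w : \sum_(i < n) w ^+ i = 0.
  move: rootPw; rewrite /root horner_poly => /eqP Pw; rewrite -[RHS]Pw.
  by apply: eq_bigr => i _; rewrite mul1r.
exists w; first by apply/eqP; rewrite -subr_eq0 subrX1 sum_w mulr0.
move/eqP: sum_w; apply: contraTneq => ->; under eq_bigr do rewrite expr1n.
by rewrite sumr_const card_ord pnatr_eq0 -lt0n ltnW.
Qed.

(* A nonzero F_p-coordinate form of F composed with k |-> w ^+ k; the exponent
   (Zp_trunc (pdiv p)).+2 is just p, the order of 'F_p. *)
Lemma exists_additive_char (F : finFieldType) (p : nat) (C : numClosedFieldType) :
  p \in [pchar F] ->
  exists psi : F -> C,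
    [/\ {morph psi : x y / x + y >-> x * y}, psi 0 = 1 & exists c, psi c != 1].
Proof.
move=> pF; pose FF := pPrimeCharType pF.
have dim_gt0 : (0 < \dim {: FF})%N.
  rewrite lt0n dimv_eq0; apply: contraTneq (memvf (1 : FF)) => ->.
  by rewrite memv0 oner_eq0.
pose i0 := Ordinal dim_gt0; pose X := vbasis {: FF}.
have [w wp w1] := @exists_nontrivial_root1 C (Zp_trunc (pdiv p)).+2 isT.
exists (fun x : F => w ^+ coord X i0 (x : FF)); split.
- by move=> x y /=; rewrite (linearD (coord X i0) (x : FF)) /= (expr_mod _ wp) exprD.
- by rewrite (linear0 (coord X i0)) expr0.
- exists (X`_i0 : FF).
  by rewrite coord_free ?eqxx ?expr1 //; exact: basis_free (vbasisP _).
Qed.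

Section AdditiveCharacter.
Variables (F : finFieldType) (C : numClosedFieldType) (p : nat) (psi : F -> C) (c0 : F).
Hypotheses (pF : p \in [pchar F]) (psiD : {morph psi : x y / x + y >-> x * y}).
Hypotheses (psi0 : psi 0 = 1) (psi_c0 : psi c0 != 1).

Let p_gt0 : (0 < p)%N := prime_gt0 (pcharf_prime pF).

Lemma char_sum (I : finType) (P : pred I) (f : I -> F) :
  psi (\sum_(i | P i) f i) = \prod_(i | P i) psi (f i).
Proof. exact: (big_morph psi psiD psi0). Qed.

Lemma char_mulrn x n : psi (x *+ n) = psi x ^+ n.
Proof.
elim: n => [|n IH]; first by rewrite mulr0n expr0.
by rewrite mulrS psiD IH exprS.
Qed.

Lemma norm_char x : `|psi x| = 1.
Proof.
have psi_p : psi x ^+ p = 1 by rewrite -char_mulrn (mulrn_pchar pF) psi0.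
apply/eqP; rewrite -(pexpr_eq1 p_gt0) ?normr_ge0 //.
by rewrite -normrX psi_p normr1.
Qed.

Lemma conj_char x : (psi x)^* = psi (- x).
Proof.
have psi_neq0 : psi x != 0 by rewrite -normr_eq0 norm_char oner_eq0.
apply: (mulfI psi_neq0); rewrite -normCK norm_char expr1n -psiD.
by rewrite subrr psi0.
Qed.

Lemma sum_char : \sum_(y : F) psi y = 0.
Proof.
have psi_c0_sum : psi c0 * \sum_(y : F) psi y = \sum_(y : F) psi y.
  rewrite mulr_sumr [RHS](reindex_inj (addrI c0)) /=.
  by apply: eq_bigr => y _; rewrite psiD.
apply/eqP; move/eqP: psi_c0_sum.
by rewrite -subr_eq0 -{2}(mul1r (\sum_y psi y)) -mulrBl mulf_eq0 subr_eq0 (negbTE psi_c0).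
Qed.

Lemma sum_char_mul x : \sum_(b : F) psi (b * x) = (x == 0)%:R * #|F|%:R.
Proof.
have [->|x0] := eqVneq x 0.
  by under eq_bigr do rewrite mulr0 psi0; rewrite sumr_const mul1r.
by have := sum_char; rewrite (reindex_inj (mulIf x0)) /= => ->; rewrite mul0r.
Qed.

Variable H : {group {unit F}}.

Definition char_scale (b : F) (a : {unit F}) : C := psi (b * FinRing.uval a).

Definition gauss_period (b : F) : C := \sum_(a in H) char_scale b a.

Lemma sum_gauss_period_sqr :
  \sum_(c : F) `|gauss_period c| ^+ 2 = #|F|%:R * #|H|%:R.
Proof.
have expand c : `|gauss_period c| ^+ 2 =
    \sum_(a in H) \sum_(a' in H) psi (c * (FinRing.uval a - FinRing.uval a')).
  rewrite normCK /gauss_period /char_scale rmorph_sum mulr_suml; apply: eq_bigr => a _.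
  rewrite mulr_sumr; apply: eq_bigr => a' _.
  by rewrite /= conj_char -psiD mulrBr.
under eq_bigr do rewrite expand.
rewrite exchange_big /=; under eq_bigr do rewrite exchange_big /=.
rewrite [LHS](eq_bigr (fun=> #|F|%:R)) => [|a aH]; first by rewrite sumr_const mulr_natr.
under eq_bigr do rewrite sum_char_mul subr_eq0 val_eqE.
rewrite (bigD1 a) //= eqxx mul1r big1 ?addr0 // => a' /andP[_ /negbTE].
by rewrite eq_sym => ->; rewrite mul0r.
Qed.

Lemma gauss_periodMu b h : h \in H -> gauss_period (b * FinRing.uval h) = gauss_period b.
Proof.
move=> hH; rewrite /gauss_period /char_scale.
rewrite [RHS](reindex_inj (mulgI h)) /= [RHS](eq_bigl (mem H)) => [|a]; last by rewrite groupMl.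
by apply: eq_bigr => a _; rewrite mulrA.
Qed.

(* The |H| dilates b h of b are distinct and share the same Gauss period, so
   Parseval gives |H| |S(b)|^2 <= q |H|. *)
Lemma gauss_period_sqr_le b : b != 0 -> `|gauss_period b| ^+ 2 <= #|F|%:R.
Proof.
move=> b0; have H_gt0 : (0 : C) < #|H|%:R by rewrite ltr0n cardG_gt0.
rewrite -(ler_pM2l H_gt0) [X in _ <= X]mulrC -sum_gauss_period_sqr.
have -> : #|H|%:R * `|gauss_period b| ^+ 2 =
          \sum_(h in H) `|gauss_period (b * FinRing.uval h)| ^+ 2.
  by under eq_bigr do rewrite gauss_periodMu //; rewrite sumr_const mulr_natl.
have inj_bh : {in H &, injective (fun h : {unit F} => b * FinRing.uval h)}.
  by move=> x y _ _ /(mulfI b0) /val_inj.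
rewrite -(big_imset (fun c => `|gauss_period c| ^+ 2) inj_bh) /=.
rewrite [X in _ <= X](bigID (mem [set b * FinRing.uval x | x in H])) /= lerDl.
by apply: sumr_ge0 => c _; exact: exprn_ge0.
Qed.

Lemma power_sum_char_scale b j : power_sum (char_scale b) H j = gauss_period (b *+ j).
Proof.
by apply: eq_bigr => a _; rewrite /char_scale -char_mulrn mulrnAl.
Qed.

Lemma elem_sym_char_scale_le (B a : C) b j : b != 0 ->
  0 <= B -> 0 <= a -> #|F|%:R <= B ^+ 2 -> #|H|%:R <= p%:R * a ->
  `|elem_sym (char_scale b) H j| <= multichoose (B + a) j.
Proof.
move=> b0 B0 a0 qB Hpa.
have B1 : 1 <= B.
  rewrite -(ler_pXn2r (isT : (0 < 2)%N)) ?nnegrE ?expr1n //.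
  by apply: le_trans qB; rewrite ler1n (ltnW (card_finNzRing_gt1 F)).
have period_le c : c != 0 -> `|gauss_period c| <= B.
  move=> c_neq0; rewrite -(ler_pXn2r (isT : (0 < 2)%N)) ?nnegrE ?normr_ge0 //.
  exact: le_trans (gauss_period_sqr_le c_neq0) qB.
apply: (@le_multichoose_newton _ p B a _ (fun j => `|power_sum (char_scale b) H j|)
          p_gt0 B0 a0 _ (fun n => normr_ge0 _) _ (fun j => normr_ge0 _)).
- by rewrite (le_trans B1) // lerDl.
- by rewrite elem_sym0 normr1.
- move=> i; rewrite power_sum_char_scale.
  have [pi | pNi] := boolP (p %| i)%N.
    have /eqP i0 : i%:R == 0 :> F by rewrite -(dvdn_pcharf pF).
    have -> : gauss_period (b *+ i) = #|H|%:R.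
      rewrite -[b *+ i]mulr_natr i0 mulr0 /gauss_period.
      by under eq_bigr do rewrite /char_scale mul0r psi0; rewrite sumr_const.
    by rewrite normr_nat mul1r (le_trans Hpa) // lerDr.
  rewrite mul0r addr0; apply: period_le.
  by rewrite -mulr_natr mulf_eq0 negb_or b0 -(dvdn_pcharf pF).
- move=> n; rewrite -normr_nat -normrM newton_identity.
  apply: le_trans (ler_norm_sum _ _ _) _; apply: ler_sum => i _.
  by rewrite normrM normrX normrN1 expr1n mul1r normrM.
Qed.

Lemma elem_sym_char_scale0 k : elem_sym (char_scale 0) H k = 'C(#|H|, k)%:R.
Proof.
rewrite /elem_sym -cards_draws -sum1_card natr_sum.
rewrite [RHS](eq_bigl (fun S : {set {unit F}} => (S \subset H) && (#|S| == k))) => [|S];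
  last by rewrite inE.
apply: eq_bigr => S _; rewrite /char_scale.
by under eq_bigr do rewrite mul0r psi0; rewrite prodr_const expr1n.
Qed.

Lemma M_H_char_sum k :
  #|F|%:R * (M_H H k)%:R = \sum_(b : F) elem_sym (char_scale b) H k.
Proof.
have char_prod b : elem_sym (char_scale b) H k =
    \sum_(S : {set {unit F}} | (S \subset H) && (#|S| == k))
      psi (b * \sum_(a in S) FinRing.uval a).
  by apply: eq_bigr => S _; rewrite mulr_sumr char_sum.
under eq_bigr do rewrite char_prod.
rewrite exchange_big /=; under eq_bigr do rewrite sum_char_mul.
rewrite -mulr_suml mulrC; congr (_ * _).
rewrite /M_H -sum1_card natr_sum [RHS]big_mkcond [LHS]big_mkcond /=.
apply: eq_bigr => S _; rewrite inE.
by case: (S \subset H); case: (#|S| == k); case: (_ == 0).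
Qed.

Lemma M_H_deviation_le (B a : C) k :
  0 <= B -> 0 <= a -> #|F|%:R <= B ^+ 2 -> #|H|%:R <= p%:R * a ->
  `|(M_H H k)%:R - (#|F|%:R)^-1 * 'C(#|H|, k)%:R| <= multichoose (B + a) k.
Proof.
move=> B0 a0 qB Hpa; set q := #|F|.
have q_gt0 : (0 : C) < q%:R by rewrite ltr0n (ltn_trans _ (card_finNzRing_gt1 F)).
have dev : `|q%:R * (M_H H k)%:R - 'C(#|H|, k)%:R| <= q.-1%:R * multichoose (B + a) k.
  rewrite M_H_char_sum (bigD1 0) //= elem_sym_char_scale0 addrC addrK.
  apply: le_trans (ler_norm_sum _ _ _) _.
  apply: le_trans (ler_sum _ (fun b b0 => elem_sym_char_scale_le k b0 B0 a0 qB Hpa)) _.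
  by rewrite sumr_const cardC1 mulr_natl.
rewrite -(ler_pM2l q_gt0) -{1}(gtr0_norm q_gt0) -normrM mulrBr mulrA mulfV ?gt_eqF //.
rewrite mul1r (le_trans dev) // ler_wpM2r ?ler_nat ?leq_pred //.
by rewrite multichoose_ge0 // addr_ge0.
Qed.

End AdditiveCharacter.

Lemma fmorph_multichoose (K L : numFieldType) (f : {rmorphism K -> L}) (t : K) n :
  f (multichoose t n) = multichoose (f t) n.
Proof.
rewrite rmorph_prod; apply: eq_bigr => i _.
by rewrite fmorph_div rmorphD !rmorph_nat.
Qed.

Lemma binomR_multichoose (R : realType) (t : R) k :
  binomR (t + k%:R - 1) k = multichoose t k.
Proof.
rewrite /binomR /multichoose prodf_div; congr (_ / _).
  rewrite (reindex_inj rev_ord_inj) /=; apply: eq_bigr => i _.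
  rewrite natrB ?ltn_ord // -addn1 natrD; ring.
by rewrite fact_prod natr_prod big_add1 /= big_mkord.
Qed.

Local Open Scope complex_scope.

Lemma normc_real (R : rcfType) (x : R) : `|x%:C| = `|x|%:C.
Proof. by rewrite normc_def /= expr0n addr0 sqrtr_sqr. Qed.

Theorem mainTheorem11 (F : finFieldType) (p m k : nat)
    (H : {group {unit F}}) (R : realType) :
  p \in [pchar F] ->
  (0 < m)%N -> (m %| #|F|.-1)%N ->
  (#|[set: {unit F}] : H|)%g = m ->
  (1 <= k <= #|F|.-1 %/ m)%N ->
  `| (M_H H k)%:R - (#|F|%:R)^-1 * ('C(#|F|.-1 %/ m, k))%:R : R |
    <= binomR (Num.sqrt (#|F|%:R) + k%:R - 1 + #|F|%:R / (m%:R * p%:R)) k.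
Proof.
move=> pF m_gt0 _ idxH _; set q := #|F|.
have [psi [psiD psi0 [c0 psi_c0]]] := exists_additive_char R[i] pF.
have cardH_m : (#|H| * m)%N = q.-1.
  by rewrite -idxH Lagrange ?subsetT // card_finField_unit.
have -> : (q.-1 %/ m)%N = #|H| by rewrite -cardH_m mulnK.
set a : R := q%:R / (m%:R * p%:R).
have H_le : #|H|%:R <= p%:R * a.
  have p_gt0 : (0 < p)%N := prime_gt0 (pcharf_prime pF).
  have -> : p%:R * a = q%:R / m%:R.
    by rewrite /a; field; rewrite !pnatr_eq0 -!lt0n m_gt0.
  by rewrite ler_pdivlMr ?ltr0n // -natrM cardH_m ler_nat leq_pred.
set s := Num.sqrt _.
rewrite (_ : s + k%:R - 1 + a = s + a + k%:R - 1); last by ring.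
rewrite binomR_multichoose -lecR -normc_real fmorph_multichoose.
rewrite rmorphB rmorphM fmorphV !rmorph_nat rmorphD.
apply: (M_H_deviation_le pF psiD psi0 psi_c0).
- by rewrite ler0c /s sqrtr_ge0.
- by rewrite ler0c /a divr_ge0 ?mulr_ge0.
- by rewrite -rmorphXn /s sqr_sqrtr ?ler0n // rmorph_nat.
- by rewrite -!(rmorph_nat (real_complex R)) -rmorphM lecR.
Qed.
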